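(* Let $V=\{1,\ldots,p\}$ and let $\mathbf{X}_V$ be a random vector with positive definite covariance matrix $\Sigma=\{\sigma_{uv}\}_{u,v\in V}$ and concentration matrix $K=\Sigma^{-1}=\{\kappa_{uv}\}_{u,v\in V}$. Suppose $K$ implies the undirected graph $\mathcal{G}=(V,\mathcal{E})$. Then for every edge $\{x,y\}\in\mathcal{E}$, $$\omega(\langle x,y\rangle,\Sigma)=\frac{\sigma_{xy\cdot V\setminus\{x,y\}}}{1-\rho^{2}_{\{x,y\}\mid V\setminus\{x,y\}}},$$ where $\sigma_{xy\cdot V\setminus\{x,y\}}$ is the $(x,y)$ entry of the partial covariance matrix $\Sigma_{\{x,y\}\{x,y\}\cdot V\setminus\{x,y\}}$ and $\rho_{\{x,y\}\mid V\setminus\{x,y\}}$ is the vector correlation coefficient between $\mathbf{X}_{\{x,y\}}$ and $\mathbf{X}_{V\setminus\{x,y\}}$.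
   Context: For $A,B\subseteq V$ disjoint, $\Sigma_{AB}$ denotes the submatrix of $\Sigma$ with rows $A$, columns $B$; $\Sigma_{AA}^{-1}$ means $(\Sigma_{AA})^{-1}$; the partial covariance matrix is $\Sigma_{AA\cdot B}=\Sigma_{AA}-\Sigma_{AB}\Sigma_{BB}^{-1}\Sigma_{BA}$ (equal to $\Sigma_{AA}$ if $B=\emptyset$). $K$ implies an undirected graph $\mathcal{G}=(V,\mathcal{E})$ (no self-loops) if every nonzero off-diagonal entry $\kappa_{uv}$ corresponds to an edge $\{u,v\}\in\mathcal{E}$. A path between $x$ and $y$ is a sequence $\pi=\langle x=v_1,\ldots,v_k=y\rangle$ of $k\ge2$ distinct vertices with consecutive vertices adjacent; $V(\pi)$ and $\mathcal{E}(\pi)$ denote its vertex and edge sets. For a positive definite matrix $\Gamma$ indexed by $V$ and a path $\pi$ with $P=V(\pi)$, the path weight is $\omega(\pi,\Gamma)=(-1)^{|P|+1}\,|\Gamma_{PP}|\prod_{\{u,v\}\in\mathcal{E}(\pi)}\{\Gamma^{-1}\}_{uv}$, where $|\cdot|$ of a matrix is the determinant. For disjoint $A,B$, the vector alienation coefficient is $\lambda_{A\mid B}=|\Sigma_{A\cup B\,A\cup B}|/(|\Sigma_{AA}|\,|\Sigma_{BB}|)$ and the vector correlation coefficient is $\rho_{A\mid B}=\sqrt{1-\lambda_{A\mid B}}$, with the convention $\rho_{A\mid B}=0$ if $A=\emptyset$ or $B=\emptyset$. *)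

From HB Require Import structures.
From mathcomp Require Import all_boot all_order all_algebra.
Set Implicit Arguments. Unset Strict Implicit. Unset Printing Implicit Defensive.
Import Order.TTheory GRing.Theory Num.Theory.
Local Open Scope ring_scope.

Section Defs.
Variables (R : rcfType) (p : nat).

Definition posdef (M : 'M[R]_p) : Prop :=
  M^T = M /\ forall v : 'cV[R]_p, v != 0 -> 0 < (v^T *m M *m v) 0 0.

(* Submatrix M_{AB}, rows indexed by A, columns by B (in increasing order). *)
Definition subm (A B : {set 'I_p}) (M : 'M[R]_p) : 'M[R]_(#|A|, #|B|) :=
  \matrix_(i, j) M (enum_val i) (enum_val j).

(* Entries (u,v) of Sigma_{VV} - Sigma_{VB} Sigma_{BB}^{-1} Sigma_{BV};
   the partial covariance matrix Sigma_{AA.B} is its restriction to A x A,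
   so sigma_{uv.B} = pcov_entry B M u v for u, v in A.
   (Equals M u v when B is empty.) *)
Definition pcov_entry (B : {set 'I_p}) (M : 'M[R]_p) (u v : 'I_p) : R :=
  M u v - \sum_(i < #|B|) \sum_(j < #|B|)
            M u (enum_val i) * invmx (subm B B M) i j * M (enum_val j) v.

Definition pcov (A B : {set 'I_p}) (M : 'M[R]_p) : 'M[R]_#|A| :=
  \matrix_(i, j) pcov_entry B M (enum_val i) (enum_val j).

Definition valien (A B : {set 'I_p}) (M : 'M[R]_p) : R :=
  \det (subm (A :|: B) (A :|: B) M) / (\det (subm A A M) * \det (subm B B M)).

Definition vcorr (A B : {set 'I_p}) (M : 'M[R]_p) : R :=
  if (A == set0) || (B == set0) then 0 else Num.sqrt (1 - valien A B M).

Definition implies_graph (K : 'M[R]_p) (E : rel 'I_p) : Prop :=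
  forall u v, u != v -> K u v != 0 -> E u v.

Definition is_path (E : rel 'I_p) (s : seq 'I_p) : Prop :=
  (2 <= size s)%N /\ uniq s /\
  (forall i, (i.+1 < size s)%N -> forall x0, E (nth x0 s i) (nth x0 s i.+1)).

Definition path_weight (s : seq 'I_p) (G : 'M[R]_p) : R :=
  let P := [set v in s] in
  (-1) ^+ (#|P|.+1) * \det (subm P P G) *
  \prod_(e <- zip s (behead s)) (invmx G) e.1 e.2.

End Defs.

From mathcomp Require Import all_boot all_order all_algebra perm.
From mathcomp Require Import ring lra.
Set Implicit Arguments. Unset Strict Implicit. Unset Printing Implicit Defensive.
Import Order.TTheory GRing.Theory Num.Theory.
Local Open Scope ring_scope.

(* Reorder the indices so that x, y come first.  Sigma becomes a block matrix
   whose Schur complement S of the block indexed by B = V \ {x, y} is the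
   partial covariance matrix Sigma_{AA.B}.  The Schur determinant formula gives
   det Sigma = det Sigma_BB * det S, i.e. lambda_{A|B} = det S / det Sigma_AA,
   and the top-left block of Sigma^-1 is S^-1, so kappa_xy = - sigma_{xy.B} / det S
   by the 2x2 inverse formula.  Positive definiteness makes S positive definite
   and Sigma_AA - S positive semidefinite, whence 0 < det S <= det Sigma_AA:
   lambda lies in (0, 1] and rho^2 = 1 - lambda. *)

Section PositiveDefinite.
Variable R : rcfType.

Definition qform n (M : 'M[R]_n) (v : 'cV[R]_n) : R := (v^T *m M *m v) 0 0.

Definition possemidef n (M : 'M[R]_n) : Prop :=
  M^T = M /\ forall v, 0 <= qform M v.

Lemma qform_mulmx m n (M : 'M[R]_n) (P : 'M[R]_(n, m)) v :
  qform (P^T *m M *m P) v = qform M (P *m v).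
Proof. by rewrite /qform trmx_mul !mulmxA. Qed.

Lemma posdef_unitmx n (M : 'M[R]_n) : posdef M -> M \in unitmx.
Proof.
case=> _ Mpos; rewrite unitmxE unitfE; apply/negP => /det0P [v v_neq0 vM].
have vT_neq0 : v^T != 0 by rewrite -(inj_eq trmx_inj) trmxK trmx0.
by have := Mpos _ vT_neq0; rewrite trmxK vM mul0mx mxE ltxx.
Qed.

Lemma posdef_mxsub m n (h : 'I_m -> 'I_n) (M : 'M[R]_n) :
  injective h -> posdef M -> posdef (mxsub h h M).
Proof.
move=> h_inj [MT Mpos]; split; first by rewrite trmx_mxsub MT.
pose P : 'M[R]_(n, m) := colsub h 1%:M.
have PT : P^T = rowsub h 1%:M by rewrite trmx_mxsub trmx1.
have hP : rowsub h P = 1%:M.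
  by apply/matrixP => i j; rewrite !mxE (inj_eq h_inj).
have -> : mxsub h h M = P^T *m M *m P.
  by rewrite PT mul_rowsub_mx mul1mx mulmx_colsub mulmx1 mxsubcr.
move=> v v_neq0; change (0 < qform (P^T *m M *m P) v).
rewrite qform_mulmx; apply: Mpos.
apply: contra v_neq0 => /eqP Pv0; rewrite -[v]mul1mx -hP mul_rowsub_mx Pv0.
by apply/eqP/matrixP => i j; rewrite !mxE.
Qed.

Lemma posdef_invmx n (M : 'M[R]_n) : posdef M -> posdef (invmx M).
Proof.
move=> Mpd; have Mu := posdef_unitmx Mpd; case: Mpd => MT Mpos.
have MiT : (invmx M)^T = invmx M by rewrite trmx_inv MT.
split=> // v v_neq0; change (0 < qform (invmx M) v).
have -> : invmx M = (invmx M)^T *m M *m invmx M by rewrite MiT mulVmx ?mul1mx.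
rewrite qform_mulmx; apply: Mpos.
by apply: contra v_neq0 => /eqP Mv0; rewrite -[v](mulKVmx Mu) Mv0 mulmx0.
Qed.

Lemma possemidef_congr m n (M : 'M[R]_n) (P : 'M[R]_(n, m)) :
  posdef M -> possemidef (P^T *m M *m P).
Proof.
case=> MT Mpos; split; first by rewrite !trmx_mul trmxK MT mulmxA.
move=> v; rewrite qform_mulmx; have [->|Pv_neq0] := eqVneq (P *m v) 0.
  by rewrite /qform mulmx0 mxE.
exact/ltW/Mpos.
Qed.

End PositiveDefinite.

Section SchurComplement.
Variables (R : rcfType) (n1 n2 : nat).
Implicit Type M : 'M[R]_(n1 + n2).

Definition schur M : 'M[R]_n1 :=
  ulsubmx M - ursubmx M *m invmx (drsubmx M) *m dlsubmx M.

Lemma det_schur M :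
  drsubmx M \in unitmx -> \det M = \det (drsubmx M) * \det (schur M).
Proof.
move=> d_unit; rewrite -[M in LHS]submxK.
have -> : block_mx (ulsubmx M) (ursubmx M) (dlsubmx M) (drsubmx M) =
    block_mx 1%:M (ursubmx M *m invmx (drsubmx M)) 0 1%:M *m
    block_mx (schur M) 0 (dlsubmx M) (drsubmx M).
  rewrite mulmx_block !mul1mx !mul0mx ?mulmx0 ?add0r ?addr0 -!mulmxA mulVmx //.
  by rewrite mulmx1 mulmxA /schur subrK.
by rewrite det_mulmx det_ublock det_lblock !det1 !mul1r mulrC.
Qed.

Lemma ulsubmx_invmx M : M \in unitmx -> drsubmx M \in unitmx ->
  ulsubmx (invmx M) = invmx (schur M).
Proof.
move=> M_unit d_unit; have invM_M := mulVmx M_unit.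
rewrite -[invmx M]submxK -[M in _ *m M]submxK mulmx_block scalar_mx_block in invM_M.
case/eq_block_mx: invM_M => inv_ul inv_ur _ _.
have ur_inv : ursubmx (invmx M) = - (ulsubmx (invmx M) *m ursubmx M *m invmx (drsubmx M)).
  rewrite -[LHS](mulmxK d_unit) -mulNmx; congr (_ *m _).
  by apply/eqP; rewrite -addr_eq0 addrC inv_ur.
have ul_schur : ulsubmx (invmx M) *m schur M = 1%:M.
  by rewrite /schur mulmxBr !mulmxA -inv_ul ur_inv mulNmx.
have [_ S_unit] := mulmx1_unit ul_schur.
by rewrite -[LHS](mulmxK S_unit) ul_schur mul1mx.
Qed.

Lemma posdef_drsubmx M : posdef M -> posdef (drsubmx M).
Proof. by rewrite drsubmxEsub; apply: posdef_mxsub; apply: rshift_inj. Qed.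

Lemma dlsubmx_sym M : M^T = M -> dlsubmx M = (ursubmx M)^T.
Proof. by move=> MT; rewrite trmx_ursub MT. Qed.

Lemma posdef_schur M : posdef M -> posdef (schur M).
Proof.
move=> Mpd; have d_unit := posdef_unitmx (posdef_drsubmx Mpd).
have [dT _] := posdef_drsubmx Mpd; case: Mpd => MT Mpos.
have aT : (ulsubmx M)^T = ulsubmx M by rewrite trmx_ulsub MT.
have WT : (invmx (drsubmx M))^T = invmx (drsubmx M) by rewrite trmx_inv dT.
rewrite /schur dlsubmx_sym //.
set a := ulsubmx M in aT *; set b := ursubmx M; set d := drsubmx M in d_unit WT *.
split=> [|w w_neq0]; first by rewrite linearB /= !trmx_mul trmxK aT WT mulmxA.
pose v := col_mx w (- (invmx d *m b^T *m w)).
have v_neq0 : v != 0 by rewrite col_mx_eq0 negb_and w_neq0.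
have := Mpos v v_neq0; rewrite -[M]submxK dlsubmx_sym // -/a -/b -/d.
rewrite tr_col_mx mul_row_block mul_row_col.
have -> : (- (invmx d *m b^T *m w))^T = - (w^T *m b *m invmx d).
  by rewrite linearN /= !trmx_mul trmxK WT mulmxA.
rewrite !mulNmx -!mulmxA mulVmx // mulmx1 subrr mul0mx addr0.
by rewrite !(mulmxBl, mulmxBr) !mulmxA.
Qed.

Lemma possemidef_ulsubmx_schur M : posdef M -> possemidef (ulsubmx M - schur M).
Proof.
move=> Mpd; have [MT _] := Mpd.
rewrite /schur opprB addrC subrK dlsubmx_sym // -{1}[ursubmx M]trmxK.
by apply/possemidef_congr/posdef_invmx/posdef_drsubmx.
Qed.

End SchurComplement.

Section TwoByTwo.
Variable R : rcfType.
Implicit Types (M S C : 'M[R]_2) (a b : R).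

Definition vec2 a b : 'cV[R]_2 := \col_i (if i == 0 then a else b).

Lemma vec2_eq0 a b : (vec2 a b == 0) = (a == 0) && (b == 0).
Proof.
apply/eqP/andP => [v0|[/eqP-> /eqP->]].
  have entry i := congr1 (fun v : 'cV[R]_2 => v i 0) v0.
  by split; apply/eqP; [have := entry 0|have := entry 1]; rewrite !mxE.
by apply/matrixP => i j; rewrite !mxE; case: ifP.
Qed.

Lemma sum_ord2 (F : 'I_2 -> R) : \sum_i F i = F 0 + F 1.
Proof. by rewrite !big_ord_recl big_ord0 addr0; congr (F _ + F _); apply: val_inj. Qed.

Lemma det_mx22 M : \det M = M 0 0 * M 1 1 - M 0 1 * M 1 0.
Proof.
rewrite (expand_det_row _ 0) !big_ord_recl big_ord0 addr0 /cofactor !det_mx11 !mxE.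
have ords : (lift 0 0 = 1 :> 'I_2) /\ (lift ord0 ord0 = 1 :> 'I_2) /\
    (lift 1 0 = 0 :> 'I_2) /\ (ord0 = 0 :> 'I_2).
  by do !split; apply: val_inj.
case: ords => e1 [e2 [e3 e4]]; rewrite ?e1 ?e2 ?e4 ?e3.
by rewrite /= expr0 expr1 !mul1r mulN1r mulrN.
Qed.

Lemma mx22_sym M : M^T = M -> M 1 0 = M 0 1.
Proof. by move=> MT; rewrite -[in LHS]MT mxE. Qed.

Lemma qform_vec2 M a b : M^T = M ->
  qform M (vec2 a b) = a ^+ 2 * M 0 0 + 2 * a * b * M 0 1 + b ^+ 2 * M 1 1.
Proof.
move=> MT; rewrite /qform !mxE !sum_ord2 !mxE !sum_ord2 !mxE /= mx22_sym //; ring.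
Qed.

Lemma invmx2_01 M : M \in unitmx -> invmx M 0 1 = - M 0 1 / \det M.
Proof.
move=> M_unit; rewrite /invmx M_unit !mxE /cofactor det_mx11 !mxE /= expr1.
have ords : (lift 1 0 = 0 :> 'I_2) /\ (lift 0 0 = 1 :> 'I_2) by split; apply: val_inj.
by case: ords => -> ->; rewrite mulN1r mulrC.
Qed.

Lemma posdef2_00_gt0 S : posdef S -> 0 < S 0 0.
Proof.
case=> ST Spos; have := Spos (vec2 1 0); rewrite vec2_eq0 oner_eq0.
by move/(_ isT); rewrite -/(qform _ _) qform_vec2 // expr1n mul1r; lra.
Qed.

Lemma posdef2_det_gt0 S : posdef S -> 0 < \det S.
Proof.
move=> Spd; have S00_gt0 := posdef2_00_gt0 Spd; case: Spd => ST Spos.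
have := Spos (vec2 (- S 0 1) (S 0 0)); rewrite vec2_eq0 (gt_eqF S00_gt0) andbF.
move/(_ isT); rewrite -/(qform _ _) qform_vec2 // det_mx22 mx22_sym //.
have -> : (- S 0 1) ^+ 2 * S 0 0 + 2 * - S 0 1 * S 0 0 * S 0 1 + S 0 0 ^+ 2 * S 1 1 =
    S 0 0 * (S 0 0 * S 1 1 - S 0 1 * S 0 1) by ring.
by rewrite pmulr_rgt0.
Qed.

Lemma det2_le_addr S C : posdef S -> possemidef C -> \det S <= \det (S + C).
Proof.
move=> Spd [CT Cpos]; have s00_gt0 := posdef2_00_gt0 Spd.
have dS_gt0 := posdef2_det_gt0 Spd; have [ST _] := Spd.
have c00_ge0 : 0 <= C 0 0 by have := Cpos (vec2 1 0); rewrite qform_vec2 // expr1n; lra.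
set T := S + C; have TT : T^T = T by rewrite linearD /= ST CT.
have t00 : T 0 0 = S 0 0 + C 0 0 by rewrite mxE.
have t00_gt0 : 0 < T 0 0 by rewrite t00; lra.
(* For the quadratic forms q_N at v = (-t01, t00):
   s00 t00 det T = s00 (q_S + q_C) >= s00 q_S >= t00^2 det S >= s00 t00 det S. *)
set v := vec2 (- T 0 1) (T 0 0).
have qT : qform T v = T 0 0 * \det T.
  by rewrite qform_vec2 // det_mx22 (mx22_sym TT); ring.
have qSC : qform T v = qform S v + qform C v.
  by rewrite /qform mulmxDr mulmxDl mxE.
have qS : S 0 0 * qform S v >= T 0 0 ^+ 2 * \det S.
  rewrite qform_vec2 // det_mx22 (mx22_sym ST).
  have -> : S 0 0 * ((- T 0 1) ^+ 2 * S 0 0 + 2 * - T 0 1 * T 0 0 * S 0 1 + T 0 0 ^+ 2 * S 1 1) =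
    (S 0 0 * T 0 1 - S 0 1 * T 0 0) ^+ 2 + T 0 0 ^+ 2 * (S 0 0 * S 1 1 - S 0 1 * S 0 1) by ring.
  by rewrite lerDr sqr_ge0.
have qC := Cpos v.
have tS : S 0 0 * T 0 0 * \det S <= T 0 0 ^+ 2 * \det S.
  by rewrite expr2 ler_pM2r // ler_pM2r //; lra.
suff : (S 0 0 * T 0 0) * \det S <= (S 0 0 * T 0 0) * \det T.
  by rewrite ler_pM2l // mulr_gt0.
nra.
Qed.

End TwoByTwo.

Section Reindexing.
Variables (R : rcfType) (p : nat).
Implicit Type M : 'M[R]_p.

Lemma codom_enum_val (A : {set 'I_p}) : codom (@enum_val _ (mem A)) =i A.
Proof.
move=> t; apply/codomP/idP => [[i ->]|At]; first exact: enum_valP.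
by exists (enum_rank_in At t); rewrite enum_rankK_in.
Qed.

Lemma det_mxsub_codom n k (h1 : 'I_n -> 'I_p) (h2 : 'I_k -> 'I_p) M :
  n = k -> injective h1 -> injective h2 -> codom h1 =i codom h2 ->
  \det (mxsub h1 h1 M) = \det (mxsub h2 h2 M).
Proof.
move=> nk; subst k => h1_inj h2_inj h12.
have h1_s i : exists j, h1 j == h2 i.
  have /codomP [j ->] : h2 i \in codom h1 by rewrite h12 codom_f.
  by exists j.
pose s i := xchoose (h1_s i).
have h1s i : h1 (s i) = h2 i := eqP (xchooseP (h1_s i)).
have s_inj : injective s by move=> i j sij; apply: h2_inj; rewrite -!h1s sij.
have -> : mxsub h2 h2 M = row_perm (perm s_inj) (col_perm (perm s_inj) (mxsub h1 h1 M)).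
  by apply/matrixP => i j; rewrite !mxE !permE /= !h1s.
rewrite row_permE col_permE !det_mulmx !det_perm odd_permV.
by rewrite mulrCA -expr2 sqrr_sign mulr1.
Qed.

Lemma mxsub_invmx n (h : 'I_n -> 'I_p) M :
  bijective h -> M \in unitmx -> mxsub h h (invmx M) = invmx (mxsub h h M).
Proof.
move=> h_bij M_unit; have h_inj := bij_inj h_bij.
have inv : mxsub h h (invmx M) *m mxsub h h M = 1%:M.
  apply/matrixP => i j.
  have := congr1 (fun N : 'M[R]_p => N (h i) (h j)) (mulVmx M_unit).
  rewrite !mxE (inj_eq h_inj) => <-; rewrite (reindex h) /=; last exact/onW_bij.
  by apply: eq_bigr => k _; rewrite !mxE.
have [_ Mh_unit] := mulmx1_unit inv.
by rewrite -[LHS](mulmxK Mh_unit) inv mul1mx.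
Qed.

End Reindexing.

Section Correlation.
Variables (R : rcfType) (p : nat).
Implicit Types (A B : {set 'I_p}) (M : 'M[R]_p).

Lemma valien_set0r A M : \det (subm A A M) != 0 -> valien A set0 M = 1.
Proof.
move=> dA_neq0; rewrite /valien setU0.
have -> : \det (subm set0 set0 M) = 1.
  by move: (subm set0 set0 M); rewrite cards0 => N; apply: det_mx00.
by rewrite mulr1 divff.
Qed.

Lemma sqr_vcorr A B M : A != set0 -> \det (subm A A M) != 0 ->
  valien A B M <= 1 -> vcorr A B M ^+ 2 = 1 - valien A B M.
Proof.
move=> A_neq0 dA_neq0 le1; rewrite /vcorr (negbTE A_neq0) /=.
have [->|_] := eqVneq B set0; last by rewrite sqr_sqrtr // subr_ge0.
by rewrite valien_set0r // subrr expr0n.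
Qed.

End Correlation.

Section PairFirst.
Variables (R : rcfType) (p : nat) (x y : 'I_p).
Hypothesis xy : x != y.
Local Notation A := [set x; y].
Local Notation B := (~: [set x; y]).

Definition pair_ord (a : 'I_2) : 'I_p := if a == 0 then x else y.

Definition pair_first (i : 'I_(2 + #|B|)) : 'I_p :=
  match split i with inl a => pair_ord a | inr b => enum_val b end.

Lemma pair_ord_inj : injective pair_ord.
Proof.
have ord2 (a : 'I_2) : a = 0 \/ a = 1 by case: a => [[|[|//]] ?]; [left|right]; apply: val_inj.
rewrite /pair_ord => a b; case: (ord2 a) => ->; case: (ord2 b) => -> //= xy_eq;
  by move: xy; rewrite xy_eq eqxx.
Qed.

Lemma codom_pair_ord : codom pair_ord =i A.
Proof.
move=> t; rewrite !inE; apply/codomP/orP => [[a ->]|[]/eqP->].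
- by rewrite /pair_ord; case: ifP => _; [left|right].
- by exists 0.
- by exists 1.
Qed.

Lemma pair_first_lshift a : pair_first (lshift _ a) = pair_ord a.
Proof. by rewrite /pair_first (unsplitK (inl _ a)). Qed.

Lemma pair_first_rshift b : pair_first (rshift 2 b) = enum_val b.
Proof. by rewrite /pair_first (unsplitK (inr _ b)). Qed.

Lemma pair_first_bij : bijective pair_first.
Proof.
apply: inj_card_bij; last by rewrite -(cardsC A) card_ord cards2 xy.
move=> i j; rewrite -(splitK i) -(splitK j).
case: (split i) => a; case: (split j) => b /=;
  rewrite ?pair_first_lshift ?pair_first_rshift => eq_ab.
- by rewrite (pair_ord_inj eq_ab).
- by have := enum_valP b; rewrite inE -eq_ab -codom_pair_ord codom_f.
- by have := enum_valP a; rewrite inE eq_ab -codom_pair_ord codom_f.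
- by rewrite (enum_val_inj eq_ab).
Qed.

Lemma path_weight_edge (G : 'M[R]_p) :
  path_weight [:: x; y] G = - \det (subm A A G) * invmx G x y.
Proof.
rewrite /path_weight big_cons big_nil mulr1.
have -> : [set v in [:: x; y]] = A by apply/setP => t; rewrite !inE.
by rewrite [in (-1) ^+ _]cards2 xy exprS sqrrN expr1n mulr1 mulN1r.
Qed.

Variable Sigma : 'M[R]_p.
Local Notation M := (mxsub pair_first pair_first Sigma).

Lemma ulsubmx_pair_first : ulsubmx M = mxsub pair_ord pair_ord Sigma.
Proof. by apply/matrixP => i j; rewrite ulsubmxEsub !mxE !pair_first_lshift. Qed.

Lemma drsubmx_pair_first : drsubmx M = subm B B Sigma.
Proof. by apply/matrixP => i j; rewrite drsubmxEsub !mxE !pair_first_rshift. Qed.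

Lemma det_subm_pair : \det (subm A A Sigma) = \det (ulsubmx M).
Proof.
rewrite ulsubmx_pair_first; apply: det_mxsub_codom.
- by rewrite cards2 xy.
- exact: enum_val_inj.
- exact: pair_ord_inj.
- by move=> t; rewrite codom_enum_val codom_pair_ord.
Qed.

Lemma det_subm_full : \det (subm (A :|: B) (A :|: B) Sigma) = \det M.
Proof.
have [pair_first_inv _ pair_firstK] := pair_first_bij.
apply: det_mxsub_codom.
- by rewrite setUCr cardsT -(cardsC A) cards2 xy.
- exact: enum_val_inj.
- exact: bij_inj pair_first_bij.
- by move=> t; rewrite codom_enum_val setUCr inE -[t]pair_firstK codom_f.
Qed.

Lemma pcov_entry_schur : pcov_entry B Sigma x y = schur M 0 1.
Proof.
rewrite /pcov_entry /schur ulsubmxEsub ursubmxEsub dlsubmxEsub drsubmx_pair_first.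
rewrite !mxE !pair_first_lshift; congr (_ - _).
rewrite exchange_big; apply: eq_bigr => k _; rewrite !mxE mulr_suml.
by apply: eq_bigr => l _; rewrite !mxE !pair_first_lshift !pair_first_rshift.
Qed.

Lemma valien_pair_first : drsubmx M \in unitmx ->
  valien A B Sigma = \det (schur M) / \det (ulsubmx M).
Proof.
move=> d_unit; have dB_neq0 : \det (drsubmx M) != 0 by rewrite -unitfE -unitmxE.
rewrite /valien det_subm_full det_subm_pair (det_schur d_unit) -drsubmx_pair_first.
by rewrite (mulrC (\det (ulsubmx M))) invfM mulrACA mulfV // mul1r.
Qed.

Lemma invmx_pair_first : Sigma \in unitmx -> invmx Sigma x y = ulsubmx (invmx M) 0 1.
Proof.
move=> S_unit; rewrite -mxsub_invmx //; last exact: pair_first_bij.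
by rewrite ulsubmxEsub !mxE !pair_first_lshift.
Qed.

End PairFirst.

Arguments pair_first {p} x y i.

Unset Implicit Arguments.

Theorem theorem2 (R : rcfType) (p : nat) (Sigma : 'M[R]_p) (E : rel 'I_p)
  (E_sym : symmetric E) (E_irr : irreflexive E)
  (HS : posdef Sigma) (HK : implies_graph (invmx Sigma) E)
  (x y : 'I_p) (Hxy : E x y) :
  path_weight [:: x; y] Sigma =
  pcov_entry (~: [set x; y]) Sigma x y /
    (1 - (vcorr [set x; y] (~: [set x; y]) Sigma) ^+ 2).
Proof.
(* The graph only supplies x != y: the identity holds for any two distinct indices. *)
have xy : x != y by apply: contraTneq Hxy => ->; rewrite E_irr.
set M := mxsub (pair_first x y) (pair_first x y) Sigma.
have Mpd : posdef M := posdef_mxsub (bij_inj (pair_first_bij xy)) HS.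
have d_unit := posdef_unitmx (posdef_drsubmx Mpd).
have S_pd := posdef_schur Mpd.
have dS_gt0 := posdef2_det_gt0 S_pd.
have dS_le : \det (schur M) <= \det (ulsubmx M).
  rewrite -[ulsubmx M](subrKC (schur M)).
  exact: det2_le_addr (possemidef_ulsubmx_schur Mpd).
have dA_gt0 : 0 < \det (ulsubmx M) := lt_le_trans dS_gt0 dS_le.
have valienE := valien_pair_first xy d_unit.
have A_neq0 : [set x; y] != set0 by apply/set0Pn; exists x; rewrite !inE eqxx.
have dA_neq0 : \det (subm [set x; y] [set x; y] Sigma) != 0.
  by rewrite det_subm_pair // gt_eqF.
have valien_le1 : valien [set x; y] (~: [set x; y]) Sigma <= 1.
  by rewrite valienE ler_pdivrMr // mul1r.
rewrite (sqr_vcorr A_neq0 dA_neq0 valien_le1).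
rewrite opprB addrC subrK valienE path_weight_edge // det_subm_pair //.
rewrite pcov_entry_schur invmx_pair_first ?posdef_unitmx // -/M.
rewrite (ulsubmx_invmx (posdef_unitmx Mpd) d_unit) (invmx2_01 (posdef_unitmx S_pd)).
by field; rewrite !gt_eqF.
Qed.
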